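(* There exist a control system $\dot x=f(x,u)$ (with $f$ continuous near the origin and $f(0,0)=0$) and nonnegative functions $d_1,d_2$ defined near the origin for which there is no continuous function $H\colon[0,\varepsilon)\to[0,\infty)$ with $H(0)=0$ (depending only on $f$, $d_1$, $d_2$) such that every stabilizing feedback $u$ satisfying $$d_1(x)\le\|u(x)\|\le d_2(x)\quad\text{for all sufficiently small }\|x\|$$ also satisfies $$h(r):=\sup_{y\in\mathbb{B}_r(0)}\|F_u^{-1}(y)\|\le H(r)\quad\text{for all sufficiently small } r,$$ where $F_u(x):=f(x,u(x))$.
   Context: $\mathbb{B}_r(0)$ denotes the open ball of radius $r$ centered at $0$. A stabilizing feedback for $\dot x=f(x,u)$ is a map $u$ defined on a neighborhood of the origin with $u(0)=0$ such that the origin is a locally asymptotically stable equilibrium (Lyapunov stable and locally attractive) of $\dot x=f(x,u(x))$, with $x\mapsto f(x,u(x))$ continuous and $\dot x=f(x,u(x))$ having a unique solution for all $t$ from every initial condition near the origin. For such $u$, $F_u$ restricted to a suitable neighborhood of the origin is a homeomorphism onto a neighborhood of the origin, and $F_u^{-1}$ denotes this local inverse. *)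

From HB Require Import structures.
From mathcomp Require Import all_boot all_order all_algebra.
From mathcomp Require Import all_classical all_reals all_analysis.
Set Implicit Arguments. Unset Strict Implicit. Unset Printing Implicit Defensive.
Import Order.TTheory GRing.Theory Num.Theory.
Import numFieldNormedType.Exports.
Local Open Scope classical_set_scope.
Local Open Scope ring_scope.

Section Defs.
Variable R : realType.

Definition enorm (n : nat) (v : 'rV[R]_n) : R :=
  Num.sqrt (\sum_(i < n) (v ord0 i) ^+ 2).

Definition eball0 {n : nat} (r : R) : set 'rV[R]_n :=
  [set y | enorm y < r].

Definition Fu (n m : nat) (f : 'rV[R]_n -> 'rV[R]_m -> 'rV[R]_n)
  (u : 'rV[R]_n -> 'rV[R]_m) : 'rV[R]_n -> 'rV[R]_n :=
  fun x => f x (u x).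

Definition continuous_near_origin (n m : nat)
  (f : 'rV[R]_n -> 'rV[R]_m -> 'rV[R]_n) : Prop :=
  exists rho : R, 0 < rho /\
    forall x v, enorm x < rho -> enorm v < rho ->
      (fun p : 'rV[R]_n * 'rV[R]_m => f p.1 p.2) @ (x, v) --> f x v.

Definition nonneg_near_origin (n : nat) (d : 'rV[R]_n -> R) : Prop :=
  exists rho : R, 0 < rho /\ forall x, enorm x < rho -> 0 <= d x.

Definition is_solution (n : nat) (D : set 'rV[R]_n) (F : 'rV[R]_n -> 'rV[R]_n)
  (x0 : 'rV[R]_n) (phi : R -> 'rV[R]_n) : Prop :=
  [/\ phi 0 = x0,
      (forall t : R, 0 <= t -> D (phi t)),
      phi @ at_right 0 --> x0 &
      (forall t : R, 0 < t -> is_derive t 1 phi (F (phi t)))].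

Definition stabilizing (n m : nat) (f : 'rV[R]_n -> 'rV[R]_m -> 'rV[R]_n)
  (u : 'rV[R]_n -> 'rV[R]_m) : Prop :=
  exists rho : R, 0 < rho /\
  let D := @eball0 n rho in
  let F := Fu f u in
  [/\ u 0 = 0,
      (forall x, D x -> F @ x --> F x),
      (exists delta : R, 0 < delta /\ forall x0, enorm x0 < delta ->
         (exists phi, is_solution D F x0 phi) /\
         (forall phi1 phi2, is_solution D F x0 phi1 -> is_solution D F x0 phi2 ->
            forall t : R, 0 <= t -> phi1 t = phi2 t)),
      (forall eps : R, 0 < eps -> exists delta : R, 0 < delta /\
         forall x0 phi, enorm x0 < delta -> is_solution D F x0 phi ->
           forall t : R, 0 <= t -> enorm (phi t) < eps) &
      (exists delta : R, 0 < delta /\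
         forall x0 phi, enorm x0 < delta -> is_solution D F x0 phi ->
           phi t @[t --> +oo%R] --> (0 : 'rV[R]_n))].

Definition bounded_near_origin (n m : nat) (d1 d2 : 'rV[R]_n -> R)
  (u : 'rV[R]_n -> 'rV[R]_m) : Prop :=
  exists rho : R, 0 < rho /\
    forall x, enorm x < rho -> d1 x <= enorm (u x) <= d2 x.

Definition local_inverse (n : nat) (F g : 'rV[R]_n -> 'rV[R]_n) : Prop :=
  exists U V : set 'rV[R]_n,
    open U /\ open V /\ U 0 /\ V 0 /\
    (forall x, U x -> V (F x) /\ g (F x) = x) /\
    (forall y, V y -> U (g y) /\ F (g y) = y) /\
    {within U, continuous F} /\
    {within V, continuous g}.

Definition hsup (n : nat) (g : 'rV[R]_n -> 'rV[R]_n) (r : R) : \bar R :=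
  ereal_sup [set (enorm (g y))%:E | y in @eball0 n r].

End Defs.

(* Take [f x v = v] on R^2 with [d1 = 0] and [d2 = 1], so that [F_u = u]. Given a
   candidate bound [H], choose a continuous [c >= 0] with [c 0 = 0] and
   [c (r / 2) > H r], and the feedback [u x = (- x1 + c x2, - x2)]. The closed loop
   is triangular and solved explicitly ([x2] decays exponentially, [x1] by
   variation of constants), which yields existence, uniqueness, stability and
   attractivity; near the origin [|u| <= 1] by continuity of [c]. But [u] is a
   homeomorphism of R^2 with [u^-1 (0, - r / 2) = (c (r / 2), r / 2)], a point of
   norm larger than [H r] although [(0, - r / 2)] lies in the ball of radius [r]. *)

From HB Require Import structures.
From mathcomp Require Import all_boot all_order all_algebra.
From mathcomp Require Import all_classical all_reals all_analysis.
From mathcomp Require Import lra ring.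
Import Order.TTheory GRing.Theory Num.Theory.
Import numFieldNormedType.Exports.
Local Open Scope classical_set_scope.
Local Open Scope ring_scope.
Set Implicit Arguments. Unset Strict Implicit. Unset Printing Implicit Defensive.

Section matrix_entries.
Variable R : realFieldType.

Lemma normr_entry_le_mx_norm m n (x : 'M[R]_(m, n)) i j : `|x i j| <= `|x|.
Proof.
by rewrite [leRHS]/Num.Def.normr /= mx_normrE; apply/bigmax_geP; right; exists (i, j).
Qed.

Lemma cvg_entry {T} {F : set_system T} {FF : Filter F} m n
    (f : T -> 'M[R]_(m, n)) (l : 'M[R]_(m, n)) i j :
  f @ F --> l -> (fun t => f t i j) @ F --> l i j.
Proof.
move=> /cvgrPdist_le fl; apply/cvgrPdist_le => e e0.
apply: filterS (fl e e0) => t; apply: le_trans.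
have -> : l i j - f t i j = (l - f t) i j by rewrite !mxE.
exact: normr_entry_le_mx_norm.
Qed.

Lemma continuous_entry m n i j : continuous (fun x : 'M[R]_(m, n) => x i j).
Proof. by move=> x; exact: (@cvg_entry _ (nbhs x) _ _ _ id x i j cvg_id). Qed.

Lemma is_derive_entry m n (f : R -> 'M[R]_(m, n)) (t : R) (v : 'M[R]_(m, n)) i j :
  is_derive t 1 f v -> is_derive t 1 (fun s => f s i j) (v i j).
Proof.
move=> [df <-]; have dfij : derivable (fun s => f s i j) t 1 by move/derivable_mxP: df.
by apply: DeriveDef => //; rewrite derive_mx // mxE.
Qed.

End matrix_entries.

Section euclidean_norm.
Variable R : realType.

Lemma enorm_ge0 n (x : 'rV[R]_n) : 0 <= enorm x.
Proof. exact: sqrtr_ge0. Qed.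

Lemma normr_entry_le_enorm n (x : 'rV[R]_n) i : `|x ord0 i| <= enorm x.
Proof.
rewrite -sqrtr_sqr ler_sqrt; last by rewrite sumr_ge0 // => j _; rewrite sqr_ge0.
rewrite (bigD1 i) //= lerDl sumr_ge0 // => j _; exact: sqr_ge0.
Qed.

Definition vec2 (a b : R) : 'rV[R]_2 := \row_j (if j == ord0 then a else b).

Lemma vec2E0 a b : vec2 a b ord0 ord0 = a.
Proof. by rewrite mxE. Qed.

Lemma vec2E1 a b : vec2 a b ord0 ord_max = b.
Proof. by rewrite mxE. Qed.

Lemma vec2_eta (x : 'rV[R]_2) : x = vec2 (x ord0 ord0) (x ord0 ord_max).
Proof.
apply/matrixP => i j; rewrite mxE (ord1 i).
by case: j => [[|[|//]] ?]; congr (x _ _); apply: val_inj.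
Qed.

Lemma vec2_00 : vec2 0 0 = 0.
Proof. by apply/matrixP => i j; rewrite !mxE; case: ifP. Qed.

Lemma enorm_vec2_le a b : enorm (vec2 a b) <= `|a| + `|b|.
Proof.
rewrite /enorm 2!big_ord_recl big_ord0 addr0.
have -> : lift ord0 (ord0 : 'I_1) = ord_max by apply: val_inj.
rewrite vec2E0 vec2E1 -(ger0_norm (addr_ge0 (normr_ge0 a) (normr_ge0 b))).
rewrite -sqrtr_sqr ler_sqrt ?sqr_ge0 // -[a ^+ 2]real_normK ?num_real //.
rewrite -[b ^+ 2]real_normK ?num_real //.
have := normr_ge0 a; have := normr_ge0 b; nra.
Qed.

Lemma cvg_vec2 {T} {F : set_system T} {FF : Filter F} (fa fb : T -> R) a b :
  fa @ F --> a -> fb @ F --> b -> (fun t => vec2 (fa t) (fb t)) @ F --> vec2 a b.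
Proof.
move=> /cvgrPdist_le fa_a /cvgrPdist_le fb_b; apply/cvgrPdist_le => e e0.
apply: filterS2 (fa_a e e0) (fb_b e e0) => t hat hbt.
rewrite [leLHS]/Num.Def.normr /= mx_normrE; apply: bigmax_le => [|[i j] _]; first exact: ltW.
by rewrite !mxE; case: ifP.
Qed.

Lemma is_derive_vec2 (fa fb : R -> R) (t da db : R) :
  is_derive t 1 fa da -> is_derive t 1 fb db ->
  is_derive t 1 (fun s => vec2 (fa s) (fb s)) (vec2 da db).
Proof.
move=> [dfa <-] [dfb <-].
have entryE i j : (fun s => vec2 (fa s) (fb s) i j) = if j == ord0 then fa else fb.
  by apply/funext => s; rewrite mxE; case: ifP.
have d : derivable (fun s => vec2 (fa s) (fb s)) t 1.
  by apply/derivable_mxP => i j; rewrite entryE; case: ifP.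
apply: DeriveDef => //; rewrite derive_mx //; apply/matrixP => i j.
by rewrite !mxE entryE; case: ifP.
Qed.

End euclidean_norm.

Section scalar_derivatives.
Variable R : realType.

Lemma is_derive1_continuous (U : normedModType R) (f : R -> U) (x : R) (d : U) :
  is_derive x 1 f d -> {for x, continuous f}.
Proof. by move=> [df _]; exact/differentiable_continuous/derivable1_diffP. Qed.

Lemma is_derive_cvg_at_right (U : normedModType R) (f : R -> U) (x : R) (d : U) :
  is_derive x 1 f d -> f @ at_right x --> f x.
Proof. by move/is_derive1_continuous; exact: cvg_within_filter. Qed.

Lemma is_derive_subr_le (F G f g : R -> R) (a b : R) : a <= b ->
  (forall x, a <= x <= b -> is_derive x 1 F (f x)) ->
  (forall x, a <= x <= b -> is_derive x 1 G (g x)) ->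
  (forall x, a <= x <= b -> f x <= g x) -> F b - F a <= G b - G a.
Proof.
move=> ab dF dG fg; rewrite -subr_ge0.
have dGF x : a <= x <= b -> is_derive x 1 (G - F) (g x - f x).
  by move=> xab; have := is_deriveB (dG x xab) (dF x xab).
have [] := @MVT_segment R (G - F) (fun x => g x - f x) a b ab.
- by move=> x; rewrite in_itv /= => /andP[ax xb]; apply: dGF; rewrite !ltW.
- apply: continuous_in_subspaceT => x; rewrite inE /= in_itv /= => xab.
  exact: is_derive1_continuous (dGF x xab).
move=> x; rewrite in_itv /= => xab /=.
have -> : G b - F b - (G a - F a) = G b - G a - (F b - F a) by ring.
by move=> ->; rewrite mulr_ge0 ?subr_ge0 ?fg.
Qed.

(* Multiplying by [expR t] turns [e' = - e] into a zero derivative. *)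
Lemma is_derive_opp_cvg0_eq0 (e : R -> R) :
  (forall t : R, 0 < t -> is_derive t 1 e (- e t)) -> e @ at_right 0 --> 0 ->
  forall t : R, 0 < t -> e t = 0.
Proof.
move=> de e0 t t0.
pose h s := expR s * e s.
have dh (s : R) : 0 < s -> is_derive s 1 h 0.
  move=> s0; have := is_deriveM (is_derive_expR s) (de s s0).
  by rewrite /GRing.scale /= mulrN [e s * _]mulrC addNr.
have hst (s : R) : 0 < s <= t -> h t = h s.
  move=> /andP[s0 st]; apply/eqP; rewrite eq_le.
  have dh' (x : R) : s <= x <= t -> is_derive x 1 h 0 by move=> /andP[sx _]; apply: dh; lra.
  have d0 (x : R) : s <= x <= t -> is_derive x 1 (cst 0 : R -> R) 0.
    by move=> _; exact: is_derive_cst.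
  have := is_derive_subr_le st dh' d0 (fun _ _ => lexx 0).
  have := is_derive_subr_le st d0 dh' (fun _ _ => lexx 0).
  rewrite /= !subrr; lra.
have h0 : h @ at_right 0 --> 0.
  suff : h @ at_right 0 --> expR 0 * 0 by rewrite mulr0.
  apply: cvgM => //.
  apply: cvg_within_filter; exact: continuous_expR.
have ht : h @ at_right 0 --> h t.
  apply: cvg_near_cst; near=> s; apply/esym/hst/andP; split => //.
  near: s; exact: nbhs_right_le.
have : h t = 0 by apply: (cvg_unique _ ht h0).
by rewrite /h => /eqP; rewrite mulf_eq0 expR_eq0 => /eqP.
Unshelve. all: by end_near.
Qed.

End scalar_derivatives.

Section primitive.
Variable R : realType.
Notation mu := (@lebesgue_measure R).

(* The base point [-1] is arbitrary: any point below [0] gives a primitive on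
   an open interval containing [[0, +oo[]. *)
Definition primitive0 (f : R -> R) (t : R) : R :=
  (\int[mu]_(x in [set` `[-1, t]]) f x)%R - (\int[mu]_(x in [set` `[-1, 0]]) f x)%R.

Lemma primitive0_0 f : primitive0 f 0 = 0.
Proof. exact: subrr. Qed.

Lemma is_derive_primitive0 (f : R -> R) (t : R) : continuous f -> -1 < t ->
  is_derive t 1 (primitive0 f) (f t).
Proof.
move=> fc t1.
have intf : mu.-integrable `[-1, t + 1] (EFin \o f).
  apply: continuous_compact_integrable; first exact: segment_compact.
  exact: continuous_subspaceT.
have tt1 : t < t + 1 by rewrite ltrDl.
have [dF F'] := continuous_FTC1_closed tt1 intf t1 (fc t).
set F := (fun x => _) in dF F'.
have -> : primitive0 f = F - cst (F 0) by [].
rewrite -[f t]subr0; apply: is_deriveB.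
by apply: DeriveDef; [exact: dF | rewrite -derive1E].
Qed.

End primitive.

Section closed_loop.
Variable R : realType.
Variable c : R -> R.
Hypothesis c_cont : continuous c.

Definition feedback (x : 'rV[R]_2) : 'rV[R]_2 :=
  vec2 (- x ord0 ord0 + c (x ord0 ord_max)) (- x ord0 ord_max).

Definition weight (a s : R) : R := expR s * c (a * expR (- s)).

Definition traj_z (a t : R) : R := a * expR (- t).

(* Variation of constants for [y' = - y + c (traj_z a t)], [y 0 = b]. *)
Definition traj_y (b a t : R) : R := expR (- t) * (b + primitive0 (weight a) t).

Definition traj (p : 'rV[R]_2) (t : R) : 'rV[R]_2 :=
  vec2 (traj_y (p ord0 ord0) (p ord0 ord_max) t) (traj_z (p ord0 ord_max) t).

Lemma continuous_weight a : continuous (weight a).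
Proof.
move=> t; apply: cvgM; first exact: continuous_expR.
apply: continuous_comp; last exact: c_cont.
apply: cvgM; first exact: cvg_cst.
apply: continuous_comp; first exact: (cvgN cvg_id).
exact: continuous_expR.
Qed.

Lemma is_derive_expN (t : R) : is_derive t 1 (fun s => expR (- s)) (- expR (- t)).
Proof.
by have := is_derive1_comp (is_derive_expR (- t)) (is_deriveNid t 1); rewrite mulrN1.
Qed.

Lemma is_derive_traj_z a (t : R) : is_derive t 1 (traj_z a) (- traj_z a t).
Proof.
have := is_deriveM (is_derive_cst a t 1) (is_derive_expN t).
by rewrite /GRing.scale /= mulr0 addr0 /traj_z mulrN.
Qed.

Lemma is_derive_traj_y b a (t : R) : -1 < t ->
  is_derive t 1 (traj_y b a) (- traj_y b a t + c (traj_z a t)).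
Proof.
move=> t1; apply: is_derive_eq.
  exact: is_deriveM (is_derive_expN t)
    (is_deriveD (is_derive_cst b t 1) (is_derive_primitive0 (@continuous_weight a) t1)).
rewrite /GRing.scale /= /traj_y /traj_z /weight expRN.
have : expR t != 0 by rewrite gt_eqF ?expR_gt0.
by move=> ?; rewrite !fctE; field.
Qed.

Lemma is_derive_traj p (t : R) : -1 < t -> is_derive t 1 (traj p) (feedback (traj p t)).
Proof.
move=> t1; rewrite /feedback /traj !vec2E0 !vec2E1.
exact: is_derive_vec2 (is_derive_traj_y _ _ t1) (is_derive_traj_z _ t).
Qed.

Lemma traj0 p : traj p 0 = p.
Proof.
rewrite /traj /traj_y /traj_z primitive0_0 oppr0 expR0 mul1r mulr1 addr0.
by rewrite -vec2_eta.
Qed.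

Lemma traj_cvg_at_right0 p : traj p @ at_right 0 --> p.
Proof.
by rewrite -{2}(traj0 p); apply/is_derive_cvg_at_right/is_derive_traj; rewrite ltrN10.
Qed.

End closed_loop.

Section closed_loop_solutions.
Variable R : realType.
Variable c : R -> R.
Hypothesis c_cont : continuous c.

Lemma traj_unique (D : set 'rV[R]_2) p phi :
  is_solution D (feedback c) p phi -> forall t, 0 <= t -> phi t = traj c p t.
Proof.
move=> [phi0 _ phi_p dphi] t; rewrite le_eqVlt => /predU1P[<-|t0].
  by rewrite phi0 traj0.
set b := p ord0 ord0; set a := p ord0 ord_max.
pose y s := phi s ord0 ord0; pose z s := phi s ord0 ord_max.
have dy (s : R) : 0 < s -> is_derive s 1 y (- y s + c (z s)).
  by move=> s0; have := is_derive_entry ord0 ord0 (dphi s s0); rewrite vec2E0.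
have dz (s : R) : 0 < s -> is_derive s 1 z (- z s).
  by move=> s0; have := is_derive_entry ord0 ord_max (dphi s s0); rewrite vec2E1.
have zE (s : R) : 0 < s -> z s = traj_z a s.
  move=> s0; apply/eqP; rewrite -subr_eq0; apply/eqP; move: s s0.
  apply: is_derive_opp_cvg0_eq0 => [s s0|].
    apply: is_derive_eq; first exact: is_deriveB (dz s s0) (is_derive_traj_z a s).
    by ring.
  rewrite -[X in _ --> X](subrr a); apply: cvgB; first exact: cvg_entry phi_p.
  have := is_derive_cvg_at_right (is_derive_traj_z a 0).
  by rewrite /traj_z oppr0 expR0 mulr1.
have yE (s : R) : 0 < s -> y s = traj_y c b a s.
  move=> s0; apply/eqP; rewrite -subr_eq0; apply/eqP; move: s s0.
  apply: is_derive_opp_cvg0_eq0 => [s s0|].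
    have s1 : -1 < s by rewrite (lt_trans _ s0) ?ltrN10.
    apply: is_derive_eq; first exact: is_deriveB (dy s s0) (is_derive_traj_y c_cont b a s1).
    by rewrite zE //; ring.
  rewrite -[X in _ --> X](subrr b); apply: cvgB; first exact: cvg_entry phi_p.
  have := is_derive_cvg_at_right (is_derive_traj_y c_cont b a (ltrN10 R)).
  by rewrite /traj_y primitive0_0 oppr0 expR0 mul1r addr0.
by rewrite [phi t]vec2_eta /traj -(yE _ t0) -(zE _ t0).
Qed.

Hypothesis c_ge0 : forall s, 0 <= c s.

Lemma primitive0_weight_ge0 a (t : R) : 0 <= t -> 0 <= primitive0 (weight c a) t.
Proof.
move=> t0; have := @is_derive_subr_le R (cst 0) (primitive0 (weight c a))
  (fun=> 0) (weight c a) 0 t t0.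
rewrite primitive0_0 !subrr subr0; apply.
- move=> x /andP[x0 _].
  by apply: is_derive_primitive0 (@continuous_weight _ _ c_cont a) _; lra.
- by move=> x _; rewrite mulr_ge0 ?expR_ge0.
Qed.

Lemma primitive0_weight_subr_le a (T t K : R) : 0 <= T <= t ->
  (forall s, T <= s -> c (a * expR (- s)) <= K) ->
  primitive0 (weight c a) t - primitive0 (weight c a) T <= K * (expR t - expR T).
Proof.
move=> /andP[T0 Tt] cK; rewrite mulrBr.
apply: (@is_derive_subr_le R _ (fun s => K * expR s) (weight c a) (fun s => K * expR s)) => //.
- move=> x /andP[Tx _].
  by apply: is_derive_primitive0 (@continuous_weight _ _ c_cont a) _; lra.
- by move=> x /andP[Tx _]; rewrite /weight mulrC ler_pM2r ?expR_gt0 ?cK.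
Qed.

Lemma traj_y_le b a (T t K : R) : 0 <= T <= t ->
  (forall s, T <= s -> c (a * expR (- s)) <= K) ->
  `|traj_y c b a t| <= expR (- t) * (`|b| + primitive0 (weight c a) T) + K.
Proof.
move=> /andP[T0 Tt] cK; have K0 : 0 <= K by apply: le_trans (cK T (lexx T)).
have WT0 := primitive0_weight_ge0 a T0.
have Wt0 := primitive0_weight_ge0 a (le_trans T0 Tt).
have WtT := primitive0_weight_subr_le (introT andP (conj T0 Tt)) cK.
have et := expR_gt0 (- t).
have eTt : expR (- t) * expR t = 1 by rewrite expRN mulVf ?gt_eqF ?expR_gt0.
have eT : 0 <= expR (- t) * expR T by rewrite mulr_ge0 ?expR_ge0.
rewrite /traj_y normrM gtr0_norm //.
have : `|b + primitive0 (weight c a) t| <= `|b| + primitive0 (weight c a) t.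
  by apply: le_trans (ler_normD _ _) _; rewrite (ger0_norm Wt0).
nra.
Qed.

End closed_loop_solutions.

Lemma continuous_at0_le (R : realType) (c : R -> R) : {for 0, continuous c} -> c 0 = 0 ->
  forall e, 0 < e -> exists2 d, 0 < d & forall s, `|s| < d -> c s <= e.
Proof.
move=> /cvgrPdist_le c_cont c0 e /c_cont /nbhs_norm0P[d d0 cd].
exists d => // s /cd /=; rewrite c0 sub0r normrN; exact: le_trans (ler_norm _).
Qed.

Section closed_loop_stability.
Variable R : realType.
Variable c : R -> R.
Hypothesis c_cont : continuous c.
Hypothesis c_ge0 : forall s, 0 <= c s.
Hypothesis c0 : c 0 = 0.

Lemma traj_stable (eps : R) : 0 < eps -> exists2 delta : R, 0 < delta &
  forall p t, enorm p < delta -> 0 <= t -> enorm (traj c p t) < eps.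
Proof.
move=> e0; have e4 : 0 < eps / 4 by rewrite divr_gt0.
have [d d0 cd] := continuous_at0_le (@c_cont 0) c0 e4.
exists (Num.min d (eps / 4)) => [|p t]; first by rewrite lt_min d0.
set b := p ord0 ord0; set a := p ord0 ord_max.
move=> pd t0; have [bd ad] : `|b| < Num.min d (eps / 4) /\ `|a| < Num.min d (eps / 4).
  by split; apply: le_lt_trans pd; exact: normr_entry_le_enorm.
move: bd ad; rewrite !lt_min => /andP[_ be] /andP[ad ae].
have et : 0 < expR (- t) <= 1 by rewrite expR_gt0 expR_le1 oppr_le0.
have cK s : 0 <= s -> c (a * expR (- s)) <= eps / 4.
  move=> s0; apply: cd; rewrite normrM (gtr0_norm (expR_gt0 _)).
  by apply: le_lt_trans ad; rewrite ler_piMr // expR_le1 oppr_le0.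
have := traj_y_le c_cont c_ge0 b (introT andP (conj (lexx 0) t0)) cK.
rewrite primitive0_0 addr0 => yle.
have zle : `|traj_z a t| <= `|a|.
  by rewrite normrM (gtr0_norm (expR_gt0 _)) ler_piMr // expR_le1 oppr_le0.
apply: le_lt_trans (enorm_vec2_le _ _) _.
have := normr_ge0 b; nra.
Qed.

Lemma traj_y_cvg0 b a : traj_y c b a t @[t --> +oo] --> 0.
Proof.
apply/cvgrPdist_le => e e0; have e2 : 0 < e / 2 by rewrite divr_gt0.
have [d d0 cd] := continuous_at0_le (@c_cont 0) c0 e2.
have : `|a| * expR (- T) @[T --> +oo] --> `|a| * 0.
  apply: cvgM; first exact: cvg_cst.
  exact: cvgr_expR.
rewrite mulr0 => /cvgrPdist_lt /(_ d d0) aT.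
have : \forall T \near +oo, 0 <= T /\ `|a| * expR (- T) < d.
  apply: filterI; first exact: nbhs_pinfty_ge.
  by apply: filterS aT => T; rewrite sub0r normrN; exact: le_lt_trans (ler_norm _).
move=> /filter_ex[T [T0 {}aT]].
have cK s : T <= s -> c (a * expR (- s)) <= e / 2.
  move=> Ts; apply: cd; rewrite normrM (gtr0_norm (expR_gt0 _)); apply: le_lt_trans aT.
  by rewrite ler_wpM2l // ler_expR lerN2.
set M := `|b| + primitive0 (weight c a) T.
have : expR (- t) * M @[t --> +oo] --> 0 * M.
  apply: cvgM; [exact: cvgr_expR | exact: cvg_cst].
rewrite mul0r => /cvgrPdist_le /(_ _ e2) eM.
near=> t; rewrite sub0r normrN.
have Tt : 0 <= T <= t.
  by rewrite T0 /=; near: t; apply: nbhs_pinfty_ge; exact: num_real.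
apply: le_trans (traj_y_le c_cont c_ge0 b Tt cK) _; rewrite -/M.
have : expR (- t) * M <= e / 2.
  by near: t; apply: filterS eM => t; rewrite sub0r normrN; exact: le_trans (ler_norm _).
lra.
Unshelve. all: by end_near.
Qed.

Lemma traj_cvg0 p : traj c p t @[t --> +oo] --> (0 : 'rV[R]_2).
Proof.
rewrite -vec2_00; apply: cvg_vec2; first exact: traj_y_cvg0.
rewrite -(mulr0 (p ord0 ord_max)); apply: cvgM; [exact: cvg_cst | exact: cvgr_expR].
Qed.

End closed_loop_stability.

Section closed_loop_properties.
Variable R : realType.
Variable c : R -> R.
Hypothesis c_cont : continuous c.

Definition feedback_inv (y : 'rV[R]_2) : 'rV[R]_2 :=
  vec2 (c (- y ord0 ord_max) - y ord0 ord0) (- y ord0 ord_max).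

Lemma feedbackK : cancel (feedback c) feedback_inv.
Proof.
move=> x; rewrite /feedback_inv /feedback !vec2E0 !vec2E1 opprK [RHS]vec2_eta.
by congr vec2; ring.
Qed.

Lemma feedback_invK : cancel feedback_inv (feedback c).
Proof.
move=> y; rewrite /feedback_inv /feedback !vec2E0 !vec2E1 opprK [RHS]vec2_eta.
by congr vec2; ring.
Qed.

Lemma continuous_feedback : continuous (feedback c).
Proof.
move=> x; apply: (@cvg_vec2 _ _ (nbhs x) (nbhs_filter x)).
  2: exact/continuousN/continuous_entry.
apply: (@cvgD _ _ _ (nbhs x) (nbhs_filter x)); first exact/continuousN/continuous_entry.
by apply: continuous_comp; [exact: continuous_entry | exact: c_cont].
Qed.

Lemma continuous_feedback_inv : continuous feedback_inv.
Proof.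
move=> y; apply: (@cvg_vec2 _ _ (nbhs y) (nbhs_filter y)).
  2: exact/continuousN/continuous_entry.
apply: (@cvgB _ _ _ (nbhs y) (nbhs_filter y)); last exact: continuous_entry.
by apply: continuous_comp; [exact/continuousN/continuous_entry | exact: c_cont].
Qed.

Lemma feedback_local_inverse : local_inverse (feedback c) feedback_inv.
Proof.
exists setT, setT; do 2 (split; first exact: openT); do 2 split => //.
split; first by move=> x _; rewrite feedbackK.
split; first by move=> y _; rewrite feedback_invK.
by split; apply: continuous_subspaceT;
  [exact: continuous_feedback | exact: continuous_feedback_inv].
Qed.

Lemma hsup_feedback_inv_ge (r : R) : 0 < r -> ((c (r / 2))%:E <= hsup feedback_inv r)%E.
Proof.
move=> r0; pose y := vec2 0 (- (r / 2)).
have yr : eball0 r y.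
  apply: le_lt_trans (enorm_vec2_le _ _) _.
  by rewrite normr0 add0r normrN gtr0_norm ?divr_gt0 //; lra.
apply: le_trans (ereal_sup_ubound (ex_intro2 _ _ y yr erefl)); rewrite lee_fin.
apply: le_trans (normr_entry_le_enorm _ ord0); apply: le_trans (ler_norm _).
by rewrite /feedback_inv /y !vec2E0 vec2E1 opprK subr0.
Qed.

Hypothesis c_ge0 : forall s, 0 <= c s.
Hypothesis c0 : c 0 = 0.

Lemma feedback_stabilizing :
  stabilizing (fun (_ : 'rV[R]_2) (v : 'rV[R]_2) => v) (feedback c).
Proof.
exists 1; split => //=; split.
- by rewrite /feedback !mxE c0 oppr0 add0r vec2_00.
- by move=> x _; exact: continuous_feedback.
- have [delta delta0 stable] := traj_stable c_cont c_ge0 c0 ltr01.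
  exists delta; split => // p pdelta; split.
    exists (traj c p); split.
    + exact: traj0.
    + by move=> t t0; exact: stable.
    + exact: traj_cvg_at_right0.
    + by move=> t t0; apply: is_derive_traj c_cont _ _ _; rewrite (lt_trans _ t0) ?ltrN10.
  move=> phi1 phi2 sol1 sol2 t t0.
  by rewrite (traj_unique c_cont sol1) ?(traj_unique c_cont sol2).
- move=> e e0; have [delta delta0 stable] := traj_stable c_cont c_ge0 c0 e0.
  exists delta; split => // p phi pdelta sol t t0.
  by rewrite (traj_unique c_cont sol t0); exact: stable.
- exists 1; split => // p phi _ sol.
  apply: cvg_trans (traj_cvg0 c_cont c_ge0 c0 p); apply: near_eq_cvg.
  by near=> t; apply/esym/(traj_unique c_cont sol); near: t; exact: nbhs_pinfty_ge.
Unshelve. all: by end_near.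
Qed.

Lemma feedback_bounded :
  bounded_near_origin (fun _ => 0) (fun _ => 1) (feedback c).
Proof.
have q0 : 0 < 1 / 4 :> R by rewrite divr_gt0.
have [d d0 cd] := continuous_at0_le (@c_cont 0) c0 q0.
exists (Num.min d (1 / 4)); split => [|x]; first by rewrite lt_min d0 /=; lra.
rewrite lt_min => /andP[xd xq]; rewrite enorm_ge0 /=.
apply: le_trans (enorm_vec2_le _ _) _; rewrite normrN.
have x0 := normr_entry_le_enorm x ord0; have x1 := normr_entry_le_enorm x ord_max.
have cx : c (x ord0 ord_max) <= 1 / 4 by apply: cd; lra.
have := ler_normD (- x ord0 ord0) (c (x ord0 ord_max)).
rewrite normrN (ger0_norm (c_ge0 _)); lra.
Qed.

End closed_loop_properties.

Lemma continuous_within_comp {U V W : topologicalType} (A : set V) (k : U -> V) (H : V -> W) :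
  {within A, continuous H} -> continuous k -> (forall s, A (k s)) -> continuous (H \o k).
Proof.
move=> /subspace_continuousP cH ck kA s.
have kAs : k @ s --> within A (nbhs (k s)).
  move=> P /= AP; have kAP : nbhs s [set y | A (k y) -> P (k y)] := ck s _ AP.
  by apply: filterS kAP => y; apply; exact: kA.
exact: cvg_comp kAs (cH _ (kA s)).
Qed.

Lemma exists_gauge_above (R : realType) (eps : R) (H : R -> R) : 0 < eps ->
  {within `[0, eps[, continuous H} -> H 0 = 0 -> (forall r, 0 <= r < eps -> 0 <= H r) ->
  exists c : R -> R, [/\ continuous c, forall s, 0 <= c s, c 0 = 0 &
    forall r, 0 < r < eps / 2 -> H r < c (r / 2)].
Proof.
move=> eps0 Hc H0 Hge0.
pose k (s : R) := Num.min (2 * `|s|) (eps / 2).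
have kA (s : R) : `[0, eps[%classic (k s).
  rewrite /= in_itv /= le_min mulr_ge0 ?normr_ge0 //= gt_min; apply/andP; split; lra.
have kc : continuous k.
  move=> s; have c2s : {for s, continuous (fun s : R => 2 * `|s|)}.
    by apply: cvgM; [exact: cvg_cst | exact: (@norm_continuous _ R^o)].
  have ceps : {for s, continuous (fun _ : R => eps / 2)} by exact: cvg_cst.
  by have := continuous_min c2s ceps.
exists (fun s => H (k s) + `|s|); split.
- move=> s; apply: cvgD; last exact: (@norm_continuous _ R^o).
  exact: continuous_within_comp Hc kc kA s.
- by move=> s; rewrite addr_ge0 //; apply: Hge0; have := kA s; rewrite /= in_itv.
- by rewrite /k normr0 mulr0 min_l ?H0 ?addr0 //; lra.
- move=> r /andP[r0 re]; rewrite /k gtr0_norm ?divr_gt0 // mulrC divfK ?pnatr_eq0 //.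
  by rewrite min_l ?ltrDl ?divr_gt0 //; lra.
Qed.

Theorem theorem7 (R : realType) :
  exists (n m : nat) (f : 'rV[R]_n -> 'rV[R]_m -> 'rV[R]_n) (d1 d2 : 'rV[R]_n -> R),
    [/\ continuous_near_origin f, f 0 0 = 0,
        nonneg_near_origin d1, nonneg_near_origin d2 &
        forall (eps : R) (H : R -> R),
          0 < eps ->
          {within `[0, eps[, continuous H} ->
          H 0 = 0 ->
          (forall r, 0 <= r < eps -> 0 <= H r) ->
          ~ (forall u : 'rV[R]_n -> 'rV[R]_m,
               stabilizing f u -> bounded_near_origin d1 d2 u ->
               forall g, local_inverse (Fu f u) g ->
               exists delta : R, 0 < delta /\
                 forall r, 0 < r < delta -> (hsup g r <= (H r)%:E)%E)].
Proof.
exists 2%N, 2%N, (fun _ v => v), (fun _ => 0), (fun _ => 1); split => //.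
- by exists 1; split => // x v _ _; exact: cvg_snd.
- by exists 1.
- by exists 1; split => // x _; rewrite ler01.
move=> eps H eps0 Hc H0 Hge0 Hall.
have [c [cc c_ge0 c0 cH]] := exists_gauge_above eps0 Hc H0 Hge0.
have [delta [delta0 hsup_le]] := Hall (feedback c) (feedback_stabilizing cc c_ge0 c0)
  (feedback_bounded cc c_ge0 c0) (feedback_inv c) (feedback_local_inverse cc).
set m := Num.min delta (eps / 2).
have [m0 mdelta meps] : [/\ 0 < m, m <= delta & m <= eps / 2].
  by rewrite lt_min delta0 divr_gt0 // !ge_min !lexx ?orbT.
have r0 : 0 < m / 2 by rewrite divr_gt0.
have r_delta : 0 < m / 2 < delta by rewrite r0 /=; lra.
have r_eps : 0 < m / 2 < eps / 2 by rewrite r0 /=; lra.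
have := le_trans (hsup_feedback_inv_ge c r0) (hsup_le _ r_delta); rewrite lee_fin.
by have := cH _ r_eps; lra.
Qed.
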